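(* There exists a 5-chromatic planar graph if and only if there exists a 4-chromatic planar graph $G$ with distinct vertices $u,v$ such that $\{u,v\}$ is an implicit-edge of $G$ and the vertex contraction $G/u,v$ is planar.
   Context: All graphs are finite, simple and connected. For a graph $G$ and vertices $u,v$, $G-uv$ denotes $G$ with the edge $uv$ removed if $uv\in E(G)$ (and $G$ itself otherwise). A $k$-coloring is a proper vertex coloring with colors from $\{1,\dots,k\}$. Given a $k$-chromatic graph $G$, a pair of distinct vertices $\{u,v\}$ is an implicit-edge of $G$ iff there is no $k$-coloring $c$ of $G-uv$ with $c(u)=c(v)$. The vertex contraction $G/u,v$ replaces $u,v$ by a single new vertex $w$ with $N(w)=(N(u)\cup N(v))\setminus\{u,v\}$. *)

From mathcomp Require Import all_boot.
From Stdlib Require Import Reals.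
Unset Printing Implicit Defensive.

Definition simple_connected_graph {T : finType} (e : rel T) : Prop :=
  symmetric e /\ irreflexive e /\ (forall x y : T, connect e x y).

Definition proper_coloring {T : finType} (e : rel T) {k : nat} (c : T -> 'I_k) : Prop :=
  forall x y : T, e x y -> c x != c y.

Definition colorable {T : finType} (e : rel T) (k : nat) : Prop :=
  exists c : T -> 'I_k, proper_coloring e c.

Definition chromatic {T : finType} (e : rel T) (k : nat) : Prop :=
  colorable e k /\ ~ colorable e k.-1.

Definition remove_edge {T : finType} (e : rel T) (u v : T) : rel T :=
  fun x y => e x y && ~~ (((x == u) && (y == v)) || ((x == v) && (y == u))).

Definition implicit_edge {T : finType} (e : rel T) (k : nat) (u v : T) : Prop :=
  u != v /\
  ~ (exists c : T -> 'I_k, proper_coloring (remove_edge e u v) c /\ c u = c v).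

(* Vertex contraction G/u,v: vertex set V \ {v}, the vertex u plays the role of
   the new vertex w; a vertex a of G is sent to [merge a] (v |-> u). *)
Definition merge {T : finType} (u v : T) (a : T) : T := if a == v then u else a.

Definition contract_vertex {T : finType} (v : T) : finType := {x : T | x != v}.

Definition contract_rel {T : finType} (e : rel T) (u v : T) : rel (contract_vertex v) :=
  fun x y => (val x != val y) &&
    [exists a : T, exists b : T,
       [&& e a b, merge u v a == val x & merge u v b == val y]].

Local Open Scope R_scope.

Definition planar {T : finType} (e : rel T) : Prop :=
  exists (p : T -> R * R) (arc : T -> T -> R -> R * R),
    (forall x y : T, p x = p y -> x = y) /\
    (forall x y : T, e x y ->
       arc x y 0 = p x /\ arc x y 1 = p y /\
       (forall t : R, continuity_pt (fun s => fst (arc x y s)) t) /\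
       (forall t : R, continuity_pt (fun s => snd (arc x y s)) t) /\
       (forall s t : R, 0 <= s <= 1 -> 0 <= t <= 1 -> arc x y s = arc x y t -> s = t) /\
       (forall (z : T) (t : R), 0 < t < 1 -> arc x y t <> p z) /\
       (forall (x' y' : T) (s t : R), e x' y' ->
          ~ ((x' = x /\ y' = y) \/ (x' = y /\ y' = x)) ->
          0 < s < 1 -> 0 < t < 1 -> arc x y s <> arc x' y' t)).

(* If a planar graph is not 4-colourable, it has a subgraph H that is minimal
   (in vertices plus edges) among non-4-colourable ones: H is connected,
   5-colourable, and deleting any edge ab makes it 4-colourable, every
   4-colouring of H - ab giving a and b the same colour.  Subdividing ab by a
   new vertex w along the arc of ab keeps the graph planar and makes it
   4-chromatic; {b, w} is an implicit edge, since a colouring of the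
   subdivision with c b = c w properly colours H; and contracting b, w gives
   back H.  Conversely, a 4-colouring of G/u,v is a 4-colouring of G - uv
   identifying u and v, so an implicit edge makes G/u,v non-4-colourable, and
   its minimal non-4-colourable subgraph is a planar 5-chromatic graph. *)

From Pilot Require Import Defs.
From mathcomp Require Import all_boot.
From Stdlib Require Import Reals Lra Classical.

Set Implicit Arguments.
Unset Strict Implicit.

Lemma ex_minimal_measure (A : Type) (m : A -> nat) (P : A -> Prop) :
  (exists a, P a) -> exists a, P a /\ forall b, P b -> m a <= m b.
Proof.
suff: forall n a, m a = n -> P a -> exists a, P a /\ forall b, P b -> m a <= m b.
  by move=> H [a Pa]; exact: H _ a erefl Pa.
elim/ltn_ind=> n IH a ma_n Pa; subst n.
have [[b [Pb lt_ba]] | no_smaller] := classic (exists b, P b /\ m b < m a).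
  exact: IH lt_ba b erefl Pb.
exists a; split=> // b Pb; rewrite leqNgt; apply/negP=> lt_ba.
by apply: no_smaller; exists b.
Qed.

Definition recolor (T : finType) (k : nat) (c : T -> 'I_k) (w x : T) : 'I_k.+1 :=
  if x == w then ord_max else widen_ord (leqnSn k) (c x).

Lemma recolor_neq (T : finType) (k : nat) (c : T -> 'I_k) (w x y : T) :
  x != y -> (x != w -> y != w -> c x != c y) -> recolor c w x != recolor c w y.
Proof.
rewrite /recolor => neq_xy neq_c.
have widen_neq_max z : widen_ord (leqnSn k) (c z) != ord_max.
  by rewrite -val_eqE /= neq_ltn ltn_ord.
case: (x =P w) => [xw | /eqP xw]; case: (y =P w) => [yw | /eqP yw].
- by move: neq_xy; rewrite xw yw eqxx.
- by rewrite eq_sym.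
- exact: widen_neq_max.
- by rewrite -val_eqE /= val_eqE neq_c.
Qed.

Section Coloring.
Variables (T : finType) (e : rel T) (u v : T).

Lemma colorable_remove_edge k :
  irreflexive e -> colorable (remove_edge e u v) k -> colorable e k.+1.
Proof.
move=> irr [c col]; exists (recolor c u) => x y exy; apply: recolor_neq.
  by apply: contraTneq exy => ->; rewrite irr.
by move=> xu yu; apply: col; rewrite /remove_edge exy (negbTE xu) (negbTE yu) andbF.
Qed.

Lemma proper_coloring_remove_edge k (c : T -> 'I_k) :
  proper_coloring (remove_edge e u v) c -> c u != c v -> proper_coloring e c.
Proof.
move=> col neq_uv x y exy.
have [/orP[] /andP[/eqP-> /eqP->] // | not_uv] :=
  boolP ((x == u) && (y == v) || (x == v) && (y == u)).
  by rewrite eq_sym.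
by apply: col; rewrite /remove_edge exy not_uv.
Qed.

Lemma remove_edge_coloring_eq k (c : T -> 'I_k) :
  ~ colorable e k -> proper_coloring (remove_edge e u v) c -> c u = c v.
Proof.
move=> not_col col; apply/eqP/negPn/negP => neq_uv.
by apply: not_col; exists c; exact: proper_coloring_remove_edge.
Qed.

End Coloring.

Definition colorable_on (T : finType) (k : nat) (S : {set T}) (F : {set T * T}) :=
  exists c : T -> 'I_k, forall x y, x \in S -> y \in S -> (x, y) \in F -> c x != c y.

Section CriticalSubgraph.
Variables (T : finType) (e : rel T) (k : nat) (S : {set T}) (F : {set T * T}).
Hypotheses (e_sym : symmetric e) (e_irr : irreflexive e).
Hypothesis F_sub : forall x y, (x, y) \in F -> e x y.
Hypothesis not_colorable_SF : ~ colorable_on k.+1 S F.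
Hypothesis minimal_SF : forall (S' : {set T}) (F' : {set T * T}),
  #|S'| + #|F'| < #|S| + #|F| ->
  (forall x y, (x, y) \in F' -> e x y) -> colorable_on k.+1 S' F'.

Lemma colorable_on_proper_vertices (S' : {set T}) : S' \proper S -> colorable_on k.+1 S' F.
Proof. by move=> ltS; apply: minimal_SF => //; rewrite ltn_add2r proper_card. Qed.

Lemma colorable_on_proper_edges (F' : {set T * T}) : F' \proper F -> colorable_on k.+1 S F'.
Proof.
move=> ltF; apply: minimal_SF; first by rewrite ltn_add2l proper_card.
by move=> x y /(subsetP (proper_sub ltF)) /F_sub.
Qed.

Definition subgraph_vertex : finType := {x : T | x \in S}.

Definition subgraph_rel : rel subgraph_vertex :=
  fun x y => ((val x, val y) \in F) || ((val y, val x) \in F).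

Lemma subgraph_rel_sym : symmetric subgraph_rel.
Proof. by move=> x y; rewrite /subgraph_rel orbC. Qed.

Lemma subgraph_rel_homo : {homo val : x y / subgraph_rel x y >-> e x y}.
Proof. by move=> x y /orP[/F_sub // | /F_sub]; rewrite e_sym. Qed.

Lemma subgraph_rel_irr : irreflexive subgraph_rel.
Proof. by move=> x; apply/negP => /subgraph_rel_homo; rewrite e_irr. Qed.

Lemma subgraph_not_colorable : ~ colorable subgraph_rel k.+1.
Proof.
move=> [c col]; apply: not_colorable_SF.
exists (fun x => if insub x is Some x' then c x' else ord0) => x y xS yS xyF.
by rewrite (insubT (mem S) xS) (insubT (mem S) yS); apply: col; rewrite /subgraph_rel /= xyF.
Qed.

Lemma subgraph_colorable_succ : colorable subgraph_rel k.+2.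
Proof.
have [S0 | [w wS]] := set_0Vmem S.
  by case: not_colorable_SF; exists (fun _ => ord0) => x y; rewrite S0 inE.
have [c col] := colorable_on_proper_vertices (properD1 wS).
exists (fun x => recolor c w (val x)) => x y xy; apply: recolor_neq.
  by apply: contraTneq xy => /val_inj ->; rewrite subgraph_rel_irr.
move=> xw yw; case/orP: xy => [xyF | yxF].
  by apply: col; rewrite ?inE ?xw ?yw ?(valP x) ?(valP y).
by rewrite eq_sym; apply: col; rewrite ?inE ?xw ?yw ?(valP x) ?(valP y).
Qed.

Lemma subgraph_connected x y : connect subgraph_rel x y.
Proof.
apply/negPn/negP => not_xy.
(* Otherwise colour the vertices reachable from x and the others separately:
   both are proper subsets of S and no edge of F joins them. *)
pose C := val @: [set z | connect subgraph_rel x z].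
have C_S : C \subset S by apply/subsetP => _ /imsetP[z _ ->]; exact: valP.
have C_closed z w : z \in C -> w \in S -> ((z, w) \in F) || ((w, z) \in F) -> w \in C.
  case/imsetP=> z'; rewrite inE => xz' -> wS zw; apply/imsetP; exists (Sub w wS) => //.
  by rewrite inE (connect_trans xz') // connect1.
have [c1 col1] : colorable_on k.+1 C F.
  apply: colorable_on_proper_vertices; apply/properP; split=> //.
  exists (val y); first exact: valP.
  by rewrite mem_imset ?inE //; exact: val_inj.
have [c2 col2] : colorable_on k.+1 (S :\: C) F.
  apply: colorable_on_proper_vertices; apply/properP; split; first exact: subsetDl.
  exists (val x); first exact: valP.
  by rewrite inE negb_and negbK imset_f ?inE ?connect0.
apply: not_colorable_SF.
exists (fun z => if z \in C then c1 z else c2 z) => z w zS wS zwF.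
case: ifP => zC; case: ifP => wC.
- exact: col1.
- by rewrite (C_closed z w) ?zwF in wC.
- by rewrite (C_closed w z) ?zwF ?orbT in zC.
- by apply: col2; rewrite // !inE ?zC ?wC.
Qed.

Lemma subgraph_edge_critical :
  exists a b, subgraph_rel a b /\ colorable (remove_edge subgraph_rel a b) k.+1.
Proof.
have [a [b [aS bS abF]]] : exists a b, [/\ a \in S, b \in S & (a, b) \in F].
  apply: NNPP => no_edge; apply: not_colorable_SF.
  exists (fun _ => ord0) => x y xS yS xyF.
  by case: no_edge; exists x, y.
have [c col] := colorable_on_proper_edges (properD1 abF).
exists (Sub a aS), (Sub b bS); split; first by rewrite /subgraph_rel /= abF.
exists (fun x => c (val x)) => x y /andP[/orP[xyF | yxF] not_ab].
  apply: col; rewrite ?(valP x) ?(valP y) // !inE xyF andbT.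
  apply: contra not_ab => /eqP[xa yb].
  by rewrite -!val_eqE /= xa yb !eqxx.
rewrite eq_sym; apply: col; rewrite ?(valP x) ?(valP y) // !inE yxF andbT.
apply: contra not_ab => /eqP[ya xb].
by rewrite -!val_eqE /= xb ya !eqxx orbT.
Qed.

End CriticalSubgraph.

Lemma critical_subgraph (T : finType) (e : rel T) (k : nat) :
  symmetric e -> irreflexive e -> ~ colorable e k.+1 ->
  exists (T' : finType) (e' : rel T') (f : T' -> T),
    [/\ injective f, {homo f : x y / e' x y >-> e x y}, simple_connected_graph e',
        chromatic e' k.+2 & exists a b, e' a b /\ colorable (remove_edge e' a b) k.+1].
Proof.
move=> sym irr not_col.
pose admissible (SF : {set T} * {set T * T}) :=
  (forall x y, (x, y) \in SF.2 -> e x y) /\ ~ colorable_on k.+1 SF.1 SF.2.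
have [[S F] [[/= F_sub not_col_SF] /= min_SF]] :
    exists SF, admissible SF /\ forall SF', admissible SF' ->
      #|SF.1| + #|SF.2| <= #|SF'.1| + #|SF'.2|.
  apply: ex_minimal_measure; exists (setT, [set xy | e xy.1 xy.2]); split=> /=.
    by move=> x y; rewrite inE.
  by move=> [c col]; apply: not_col; exists c => x y exy; apply: col; rewrite ?inE.
have minimal (S' : {set T}) (F' : {set T * T}) : #|S'| + #|F'| < #|S| + #|F| ->
    (forall x y, (x, y) \in F' -> e x y) -> colorable_on k.+1 S' F'.
  move=> lt F'_sub; apply: NNPP => not_col'.
  by have := min_SF (S', F') (conj F'_sub not_col'); rewrite leqNgt lt.
exists (subgraph_vertex S), (subgraph_rel F), val; split.
- exact: val_inj.
- exact: subgraph_rel_homo.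
- split; first exact: subgraph_rel_sym.
  split; first exact: subgraph_rel_irr.
  exact: subgraph_connected F_sub not_col_SF minimal.
- split; first exact: subgraph_colorable_succ irr F_sub not_col_SF minimal.
  exact: subgraph_not_colorable not_col_SF.
- exact: subgraph_edge_critical F_sub not_col_SF minimal.
Qed.

Section PlaneEmbedding.
Local Open Scope R_scope.

Definition jordan_arc (g : R -> R * R) (P Q : R * R) : Prop :=
  g 0 = P /\ g 1 = Q /\
  (forall t, continuity_pt (fun s => fst (g s)) t) /\
  (forall t, continuity_pt (fun s => snd (g s)) t) /\
  (forall s t, 0 <= s <= 1 -> 0 <= t <= 1 -> g s = g t -> s = t).

Definition plane_embedding (T : finType) (e : rel T) (p : T -> R * R)
    (arc : T -> T -> R -> R * R) : Prop :=
  injective p /\ forall x y, e x y ->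
  [/\ jordan_arc (arc x y) (p x) (p y),
      forall z t, 0 < t < 1 -> arc x y t <> p z &
      forall x' y' s t, e x' y' -> ~ ((x' = x /\ y' = y) \/ (x' = y /\ y' = x)) ->
        0 < s < 1 -> 0 < t < 1 -> arc x y s <> arc x' y' t].

Lemma planarE (T : finType) (e : rel T) :
  planar e <-> exists p arc, plane_embedding e p arc.
Proof.
split=> -[p [arc [p_inj emb]]]; exists p, arc; split=> // x y /emb.
  by move=> [? [? [? [? [? [? ?]]]]]]; split=> //; do !split.
by move=> [[? [? [? [? ?]]]] ? ?]; do !split.
Qed.

Lemma planar_of_inj_homo (T1 T2 : finType) (e1 : rel T1) (e2 : rel T2) (f : T1 -> T2) :
  injective f -> {homo f : x y / e1 x y >-> e2 x y} -> planar e2 -> planar e1.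
Proof.
move=> f_inj f_homo /planarE[p [arc [p_inj emb]]]; apply/planarE.
exists (p \o f), (fun x y => arc (f x) (f y)); split; first exact: inj_comp.
move=> x y /f_homo /emb[jordan avoid disjoint]; split=> // [z | x' y' s t /f_homo e'xy not_same].
  exact: avoid.
apply: disjoint e'xy _ => same; apply: not_same.
by case: same => -[/f_inj-> /f_inj->]; [left | right].
Qed.

Definition subarc (g : R -> R * R) (s0 s1 t : R) : R * R := g (s0 + (s1 - s0) * t).

Lemma jordan_subarc g P Q s0 s1 :
  jordan_arc g P Q -> 0 <= s0 <= 1 -> 0 <= s1 <= 1 -> s0 <> s1 ->
  jordan_arc (subarc g s0 s1) (g s0) (g s1).
Proof.
move=> [_ [_ [g1_cont [g2_cont g_inj]]]] s0_01 s1_01 s01.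
have affine_cont (h : R -> R) : (forall t, continuity_pt h t) ->
    forall t, continuity_pt (fun s => h (s0 + (s1 - s0) * s)) t.
  move=> h_cont t; apply: (continuity_pt_comp (fun s => s0 + (s1 - s0) * s)); last exact: h_cont.
  apply: continuity_pt_plus; first exact: continuity_pt_const.
  apply: continuity_pt_mult; first exact: continuity_pt_const.
  exact: derivable_continuous_pt (derivable_pt_id t).
rewrite /subarc; split; first by rewrite Rmult_0_r Rplus_0_r.
split; first by congr g; ring.
split; first exact: (affine_cont (fun u => fst (g u))).
split; first exact: (affine_cont (fun u => snd (g u))).
move=> s t s_01 t_01 /g_inj eq_st.
have {}eq_st : s0 + (s1 - s0) * s = s0 + (s1 - s0) * t by apply: eq_st; nra.
apply: (Rmult_eq_reg_l (s1 - s0)); lra.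
Qed.

End PlaneEmbedding.

(* [None] is the vertex subdividing the edge ab. *)
Definition subdivide (T : finType) (e : rel T) (a b : T) : rel (option T) :=
  fun x y => match x, y with
  | Some x, Some y => remove_edge e a b x y
  | Some c, None | None, Some c => (c == a) || (c == b)
  | None, None => false
  end.

Section Subdivision.
Variables (T : finType) (e : rel T) (a b : T).

Lemma subdivide_sym : symmetric e -> symmetric (subdivide e a b).
Proof.
move=> sym [x|] [y|] //=.
by rewrite /remove_edge sym orbC (andbC (y == a)) (andbC (y == b)).
Qed.

Lemma subdivide_irr : irreflexive e -> irreflexive (subdivide e a b).
Proof. by move=> irr [x|] //=; rewrite /remove_edge irr. Qed.

Lemma subdivide_connect_edge x y : e x y -> connect (subdivide e a b) (Some x) (Some y).
Proof.
move=> exy; have [ab | not_ab] := boolP ((x == a) && (y == b) || (x == b) && (y == a)).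
  by apply: (@connect_trans _ _ None); apply: connect1;
    case/orP: ab => /andP[/eqP xa /eqP yb]; rewrite /= ?xa ?yb eqxx ?orbT.
by apply: connect1; rewrite /= /remove_edge exy not_ab.
Qed.

Lemma subdivide_connected :
  (forall x y, connect e x y) -> forall x y, connect (subdivide e a b) x y.
Proof.
move=> conn.
have Some_connect x y : connect (subdivide e a b) (Some x) (Some y).
  have /connectP[q eq ->] := conn x y.
  elim: q x eq => [|z q IHq] x /=; first by rewrite connect0.
  by case/andP=> exz /IHq; apply: connect_trans; exact: subdivide_connect_edge.
case=> [x|] [y|].
- exact: Some_connect.
- by apply: connect_trans (Some_connect x a) (connect1 _); rewrite /= eqxx.
- by apply: connect_trans (connect1 _) (Some_connect a y); rewrite /= eqxx.
- exact: connect0.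
Qed.

Lemma subdivide_chromatic k :
  irreflexive e -> ~ colorable e k.+2 -> colorable (remove_edge e a b) k.+2 ->
  chromatic (subdivide e a b) k.+2.
Proof.
move=> irr not_col [c col]; split.
  have cab := remove_edge_coloring_eq not_col col.
  pose w : 'I_k.+2 := if c a == ord0 then ord_max else ord0.
  have end_neq_w x : (x == a) || (x == b) -> c x != w.
    by case/orP=> /eqP->; rewrite -?cab /w; case: (c a =P ord0) => [-> | /eqP].
  exists (fun x => if x is Some x then c x else w).
  move=> [x|] [y|] //= xy; [exact: col | exact: end_neq_w | rewrite eq_sym; exact: end_neq_w].
move=> [c' col']; apply: not_col; apply: (colorable_remove_edge (u := a) (v := b) irr).
by exists (fun x => c' (Some x)) => x y; exact: (col' (Some x) (Some y)).
Qed.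

Lemma subdivide_implicit_edge k :
  irreflexive e -> e a b -> ~ colorable e k -> implicit_edge (subdivide e a b) k (Some b) None.
Proof.
move=> irr eab not_col; split=> // -[c [col cb]]; apply: not_col.
exists (fun x => c (Some x)); apply: (proper_coloring_remove_edge (u := a) (v := b)).
  by move=> x y xy; apply: col; rewrite /remove_edge /= xy andbF.
have a_neq_b : a != b by apply: contraTneq eab => ->; rewrite irr.
rewrite cb; apply: col; rewrite /remove_edge /= eqxx.
by rewrite -[Some a == Some b]/(a == b) (negbTE a_neq_b).
Qed.

(* Contracting b with the subdividing vertex undoes the subdivision. *)
Lemma planar_contract_subdivide :
  symmetric e -> e a b -> planar e -> planar (contract_rel (subdivide e a b) (Some b) None).
Proof.
move=> sym eab.
apply: (planar_of_inj_homo (f := fun x : contract_vertex None => odflt b (val x))).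
  by move=> [[x|] xN] [[y|] yN] //= xy; apply: val_inj; rewrite /= xy.
move=> [[x|] xN] [[y|] yN] //= /andP[/= neq /existsP[x' /existsP[y' /and3P[xy' mx my]]]].
case: x' y' xy' mx my neq => [x'|] [y'|] //=; rewrite /Defs.merge /=.
- by move=> /andP[exy _] /eqP[<-] /eqP[<-].
- by move=> x'_ab /eqP[<-] /eqP[<-]; case/orP: x'_ab => /eqP->; rewrite ?eqxx.
- move=> y'_ab /eqP[<-] /eqP[<-].
  by case/orP: y'_ab => /eqP->; [rewrite sym | rewrite eqxx].
Qed.

Variant subdivide_edge_spec (x y : option T) : Prop :=
  | OldEdge x0 y0 of x = Some x0 & y = Some y0 & remove_edge e a b x0 y0
  | NewEdge c of (c == a) || (c == b) & (x = Some c /\ y = None) \/ (x = None /\ y = Some c).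

Lemma subdivideP x y : subdivide e a b x y -> subdivide_edge_spec x y.
Proof.
case: x y => [x|] [y|] //= xy; first exact: OldEdge xy.
  by apply: NewEdge xy _; left.
by apply: NewEdge xy _; right.
Qed.

Section SubdivisionEmbedding.
Local Open Scope R_scope.
Variables (p : T -> R * R) (arc : T -> T -> R -> R * R).
Hypotheses (eab : e a b) (emb : plane_embedding e p arc).

Local Notation g := (arc a b).

(* The new vertex sits at g (1/2); the new edge to c in {a, b} is the half of
   g ending at c, whose interior parameters u satisfy [half c u]. *)
Definition end_param (c : T) : R := if c == a then 0 else 1.

Definition half (c : T) (u : R) : Prop := if c == a then 0 < u < /2 else /2 < u < 1.

Definition subdivision_point (x : option T) : R * R := oapp p (g (/2)) x.

Definition subdivision_arc (x y : option T) : R -> R * R :=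
  match x, y with
  | Some x, Some y => arc x y
  | Some c, None => subarc g (end_param c) (/2)
  | None, Some c => subarc g (/2) (end_param c)
  | None, None => g
  end.

Lemma half_01 c u : half c u -> 0 < u < 1.
Proof. by rewrite /half; case: (c == a); lra. Qed.

Lemma half_neq_mid c u : half c u -> u <> /2.
Proof. by rewrite /half; case: (c == a); lra. Qed.

Lemma half_inj c c' u : (c == a) || (c == b) -> (c' == a) || (c' == b) ->
  half c u -> half c' u -> c = c'.
Proof.
move=> /orP[] /eqP-> /orP[] /eqP-> //; rewrite /half eqxx;
  case: (b =P a) => [-> | _] //; lra.
Qed.

Lemma subdivision_arc_new c x y t :
  (x = Some c /\ y = None) \/ (x = None /\ y = Some c) -> 0 < t < 1 ->
  exists2 u, subdivision_arc x y t = g u & half c u.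
Proof.
move=> [[-> ->] | [-> ->]] t01; rewrite /= /subarc /end_param /half;
  case: (c == a); (eexists; [reflexivity | lra]).
Qed.

Lemma subdivision_arc_new_jordan c x y :
  (c == a) || (c == b) -> (x = Some c /\ y = None) \/ (x = None /\ y = Some c) ->
  jordan_arc (subdivision_arc x y) (subdivision_point x) (subdivision_point y).
Proof.
move=> c_ab new.
have [g_jordan _ _] := emb.2 a b eab; have [g0 [g1 _]] := g_jordan.
have end_g : g (end_param c) = p c.
  rewrite /end_param; case: (c =P a) => [-> // | /eqP ca].
  by move: c_ab; rewrite (negbTE ca) => /eqP->.
have end_01 : 0 <= end_param c <= 1 by rewrite /end_param; case: (c == a); lra.
have end_neq_mid : end_param c <> /2 by rewrite /end_param; case: (c == a); lra.
case: new => -[-> ->] /=; rewrite -end_g; apply: jordan_subarc g_jordan _ _ _ => //; lra.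
Qed.

Lemma subdivision_embedding :
  plane_embedding (subdivide e a b) subdivision_point subdivision_arc.
Proof.
have [p_inj emb_e] := emb.
have [[_ [_ [_ [_ g_inj]]]] g_avoid _] := emb_e a b eab.
have g_inj01 u u' : 0 < u < 1 -> 0 < u' < 1 -> g u = g u' -> u = u'.
  by move=> u01 u'01; apply: g_inj; lra.
have old_avoid_g x y s u :
    remove_edge e a b x y -> 0 < s < 1 -> 0 < u < 1 -> arc x y s <> g u.
  move=> /andP[exy not_ab] s01 u01; have [_ _ disj] := emb_e x y exy.
  by apply: disj => // same; move: not_ab; case: same => -[<- <-]; rewrite !eqxx ?orbT.
split.
  move=> [x|] [y|] //= pxy; first by rewrite (p_inj _ _ pxy).
    by case: (g_avoid x (/2)); [lra | rewrite pxy].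
  by case: (g_avoid y (/2)); [lra | rewrite pxy].
move=> x y xy; split.
- case: (subdivideP xy) => [x0 y0 -> -> /andP[e0 _] | c c_ab new].
    by have [] := emb_e x0 y0 e0.
  exact: subdivision_arc_new_jordan c_ab new.
- move=> z t t01; case: (subdivideP xy) => [x0 y0 -> -> old | c c_ab new].
    case: z => [z|] /=; last by apply: old_avoid_g old t01 _; lra.
    by have [_ avoid _] := emb_e x0 y0 (andP old).1; apply: avoid.
  have [u -> half_u] := subdivision_arc_new new t01.
  case: z => [z|] /=; first exact: g_avoid (half_01 half_u).
  move=> gu; apply: (half_neq_mid half_u); apply: g_inj01 gu => //; [exact: half_01 half_u | lra].
- move=> x' y' s t x'y'.
  case: (subdivideP xy) => [x0 y0 -> -> old | c c_ab new];
    case: (subdivideP x'y') => [x1 y1 -> -> old' | c' c'_ab new'] not_same s01 t01 /=.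
  + have [_ _ disj] := emb_e x0 y0 (andP old).1.
    apply: disj (andP old').1 _ s01 t01 => same; apply: not_same.
    by case: same => -[-> ->]; [left | right].
  + have [u -> half_u] := subdivision_arc_new new' t01.
    exact: old_avoid_g old s01 (half_01 half_u).
  + have [u -> half_u] := subdivision_arc_new new s01.
    apply: not_eq_sym; exact: old_avoid_g old' t01 (half_01 half_u).
  + have [u -> half_u] := subdivision_arc_new new s01.
    have [u' -> half_u'] := subdivision_arc_new new' t01.
    move=> guu'; have uu' := g_inj01 _ _ (half_01 half_u) (half_01 half_u') guu'.
    subst u'; have cc' := half_inj c_ab c'_ab half_u half_u'; subst c'.
    apply: not_same.
    by case: new => -[-> ->]; case: new' => -[-> ->]; [left | right | right | left].
Qed.

End SubdivisionEmbedding.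

Lemma planar_subdivide : e a b -> planar e -> planar (subdivide e a b).
Proof.
move=> eab /planarE[p [arc emb]]; apply/planarE.
by eexists _, _; exact: subdivision_embedding eab emb.
Qed.

End Subdivision.

Section Contraction.
Variables (T : finType) (e : rel T) (u v : T).

Lemma contract_rel_sym : symmetric e -> symmetric (contract_rel e u v).
Proof.
move=> sym; apply: symmetric_from_pre => x y.
case/andP=> neq /existsP[a /existsP[b /and3P[eab ma mb]]].
rewrite /contract_rel eq_sym neq; apply/existsP; exists b; apply/existsP; exists a.
by rewrite sym eab ma mb.
Qed.

Lemma contract_rel_irr : irreflexive (contract_rel e u v).
Proof. by move=> x; rewrite /contract_rel eqxx. Qed.

Lemma contract_not_colorable k :
  irreflexive e -> implicit_edge e k u v -> ~ colorable (contract_rel e u v) k.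
Proof.
move=> irr [uv no_identifying_coloring] [c col]; apply: no_identifying_coloring.
have merge_neq x : Defs.merge u v x != v by rewrite /Defs.merge; case: (x =P v) => [_ | /eqP].
have merge_edge x y : remove_edge e u v x y -> Defs.merge u v x != Defs.merge u v y.
  case/andP=> exy not_uv; rewrite /Defs.merge.
  case: (x =P v) => [xv | _]; case: (y =P v) => [yv | _].
  - by move: exy; rewrite xv yv irr.
  - by apply: contra not_uv => /eqP uy; rewrite xv -uy !eqxx orbT.
  - by apply: contra not_uv => /eqP xu; rewrite yv xu !eqxx.
  - by apply: contraTneq exy => ->; rewrite irr.
exists (fun x => c (Sub (Defs.merge u v x) (merge_neq x))); split.
  move=> x y xy; apply: col; rewrite /contract_rel /= merge_edge //.
  by apply/existsP; exists x; apply/existsP; exists y; rewrite (andP xy).1 !eqxx.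
by congr c; apply: val_inj; rewrite /= /Defs.merge eqxx (negbTE uv).
Qed.

End Contraction.

Theorem theorem7 :
  (exists (T : finType) (e : rel T),
      simple_connected_graph e /\ planar e /\ chromatic e 5) <->
  (exists (T : finType) (e : rel T) (u v : T),
      simple_connected_graph e /\ planar e /\ chromatic e 4 /\
      u != v /\ implicit_edge e 4 u v /\ planar (contract_rel e u v)).
Proof.
split.
- move=> [T [e [[sym [irr _]] [planar_e [_ not_col4]]]]].
  have [H [h [f [f_inj f_homo [h_sym [h_irr h_conn]] [_ h_not_col4] [a [b [hab crit]]]]]]] :=
    critical_subgraph sym irr not_col4.
  have planar_h := planar_of_inj_homo f_inj f_homo planar_e.
  exists (option H), (subdivide h a b), (Some b), None.
  split; first by do !split;
    [exact: subdivide_sym | exact: subdivide_irr | exact: subdivide_connected].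
  split; first exact: planar_subdivide.
  split; first exact: subdivide_chromatic.
  split=> //; split; first exact: subdivide_implicit_edge.
  exact: planar_contract_subdivide.
- move=> [T [e [u [v [[sym [irr _]] [_ [_ [_ [implicit planar_contraction]]]]]]]]].
  have [H [h [f [f_inj f_homo h_scg h_chromatic _]]]] :=
    critical_subgraph (contract_rel_sym u sym) (contract_rel_irr e u (v := v))
      (contract_not_colorable irr implicit).
  exists H, h; split=> //; split=> //.
  exact: planar_of_inj_homo f_inj f_homo planar_contraction.
Qed.
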